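(* Let $U_n\in(\mathcal{V}_0)^N\cap\mathcal{M}_{\leqslant}^{N;N_g}$ be an iterate of the quasi-orthogonal scheme described in the context, with step size $s_n<\frac{2}{|\lambda_1-\lambda_{\max}|}$, and let $U_{n+1}$ be produced from $U_n$ by one step of that scheme. Then the components of $U_{n+1}$ are linearly independent, i.e. $U_{n+1}^\top U_{n+1}>0$.
   Context: Let $\mathcal{V}^{N_g}$ be a real Hilbert space of finite dimension $N_g$ with inner product $(\cdot,\cdot)$ (in the paper a finite element subspace of $H_0^1(\Omega)$ with the $L^2(\Omega)$ inner product), and let $H:\mathcal{V}^{N_g}\to\mathcal{V}^{N_g}$ be a self-adjoint linear operator with smallest eigenvalue $\lambda_1$ and largest eigenvalue $\lambda_{\max}$; it is assumed that $\lambda_1<0$. Fix $N\in\mathbb{N}_+$. Elements of $(\mathcal{V}^{N_g})^N$ are written $U=(u_1,\dots,u_N)$; $U^\top V=((u_i,v_j))_{i,j=1}^N$; for a real $N\times N$ matrix $A=(a_{kj})$, $UA$ is the element whose $j$-th component is $\sum_k a_{kj}u_k$; $HU=(Hu_1,\dots,Hu_N)$. For symmetric matrices, $A\leqslant B$ means $B-A$ is positive semidefinite and $A>0$ means positive definite. Set $\nabla E(U)=HU$. For $U\in(\mathcal{V}^{N_g})^N$, $\mathcal{A}_U=\nabla E(U)U^\top-U\nabla E(U)^\top$ is the linear operator on $\mathcal{V}^{N_g}$ given by $\mathcal{A}_Uw=\sum_{i=1}^N\big(Hu_i\,(u_i,w)-u_i\,(Hu_i,w)\big)$, applied componentwise to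 elements of $(\mathcal{V}^{N_g})^N$. The quasi-Stiefel set is $\mathcal{M}_{\leqslant}^{N;N_g}=\{U:0<U^\top U\leqslant I_N\}$. Quasi-orthogonal scheme: given step sizes $s_n>0$ with $\sum_n s_n=+\infty$ and initial data $U_0$, $\hat U_{n+1}$ satisfies $\hat U_{n+1}=U_n-s_n\mathcal{A}_{\tilde U_{n+\frac12}}\tilde U_{n+\frac12}$ with $\tilde U_{n+\frac12}=\frac{U_n+\hat U_{n+1}}{2}$, and $U_{n+1}=\hat U_{n+1}-s_n\nabla E(\hat U_{n+1})(I_N-\hat U_{n+1}^\top\hat U_{n+1})$. For $j=1,\dots,N$, let $\mathcal{V}_{0_j}=\operatorname{span}\{v_{j,1},\dots,v_{j,d_j}\}$ ($d_j\geqslant1$) with each $v_{j,k}$ an eigenvector of $H$, and $(\mathcal{V}_0)^N=\mathcal{V}_{0_1}\times\cdots\times\mathcal{V}_{0_N}$. Let $\lambda_{\max}^0=\max_{j,k}\frac{(v_{j,k},Hv_{j,k})}{(v_{j,k},v_{j,k})}$. Standing assumption: $\lambda_{\max}^0\leqslant 0$. *)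

(* The finite-dimensional real Hilbert space V^{N_g} is
   modelled as column vectors 'cV[R]_Ng with the general inner product
   (u,v) = u^T M v, M symmetric positive definite (Gram matrix of a basis).
   An element U = (u_1,...,u_N) of (V^{N_g})^N is an Ng x N matrix whose
   j-th column is u_j. *)
From HB Require Import structures.
From mathcomp Require Import all_boot all_order all_algebra.
Set Implicit Arguments. Unset Strict Implicit. Unset Printing Implicit Defensive.
Import Order.TTheory GRing.Theory Num.Theory.
Local Open Scope ring_scope.

Section Defs.
Variable R : rcfType.

Definition symmx n (A : 'M[R]_n) : Prop := A^T = A.
Definition psdmx n (A : 'M[R]_n) : Prop :=
  symmx A /\ forall x : 'cV[R]_n, 0 <= (x^T *m A *m x) 0 0.
Definition pdmx n (A : 'M[R]_n) : Prop :=
  symmx A /\ forall x : 'cV[R]_n, x != 0 -> 0 < (x^T *m A *m x) 0 0.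
Definition lemx n (A B : 'M[R]_n) : Prop := psdmx (B - A).

Definition ip Ng (M : 'M[R]_Ng) (u v : 'cV[R]_Ng) : R := (u^T *m M *m v) 0 0.
(* U^T V = ((u_i, v_j))_{ij} *)
Definition gram Ng N (M : 'M[R]_Ng) (U V : 'M[R]_(Ng, N)) : 'M[R]_N :=
  U^T *m M *m V.

Definition selfadj Ng (M H : 'M[R]_Ng) : Prop :=
  forall u v : 'cV[R]_Ng, ip M (H *m u) v = ip M u (H *m v).

Definition is_eigenvalue Ng (H : 'M[R]_Ng) (a : R) : Prop :=
  exists v : 'cV[R]_Ng, v != 0 /\ H *m v = a *: v.
Definition is_eigenvector Ng (H : 'M[R]_Ng) (v : 'cV[R]_Ng) : Prop :=
  v != 0 /\ exists a : R, H *m v = a *: v.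

Definition smallest_eigenvalue Ng (H : 'M[R]_Ng) (lam : R) : Prop :=
  is_eigenvalue H lam /\ forall a, is_eigenvalue H a -> lam <= a.
Definition largest_eigenvalue Ng (H : 'M[R]_Ng) (lam : R) : Prop :=
  is_eigenvalue H lam /\ forall a, is_eigenvalue H a -> a <= lam.

Definition gradE Ng N (H : 'M[R]_Ng) (U : 'M[R]_(Ng, N)) : 'M[R]_(Ng, N) :=
  H *m U.

(* A_U w = sum_i (H u_i (u_i,w) - u_i (H u_i,w)), as an operator on V *)
Definition AU Ng N (M H : 'M[R]_Ng) (U : 'M[R]_(Ng, N)) : 'M[R]_Ng :=
  gradE H U *m U^T *m M - U *m (gradE H U)^T *m M.

Definition quasi_stiefel Ng N (M : 'M[R]_Ng) (U : 'M[R]_(Ng, N)) : Prop :=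
  pdmx (gram M U U) /\ lemx (gram M U U) 1%:M.

Definition in_V0N Ng N (d : 'I_N -> nat)
    (v : forall j : 'I_N, 'I_(d j) -> 'cV[R]_Ng) (U : 'M[R]_(Ng, N)) : Prop :=
  forall j : 'I_N, exists c : 'I_(d j) -> R,
    col j U = \sum_(k < d j) c k *: v j k.

(* one step of the quasi-orthogonal scheme: Uh is \hat U_{n+1} (defined
   implicitly), U1 is U_{n+1} *)
Definition qo_step Ng N (M H : 'M[R]_Ng) (s : R)
    (U Uh U1 : 'M[R]_(Ng, N)) : Prop :=
  let Ut := (2%:R)^-1 *: (U + Uh) in
  Uh = U - s *: (AU M H Ut *m Ut) /\
  U1 = Uh - s *: (gradE H Uh *m (1%:M - gram M Uh Uh)).

End Defs.

From HB Require Import structures.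
From mathcomp Require Import all_boot all_order all_algebra.
From mathcomp Require Import complex.
From mathcomp Require Import ring lra.
Import Order.TTheory GRing.Theory Num.Theory.
Local Open Scope ring_scope.
Set Implicit Arguments. Unset Strict Implicit. Unset Printing Implicit Defensive.

(* Write Ut for the midpoint (U + Uh) / 2 of the implicit half-step.  Since
   A_Ut is skew-adjoint, Uh has the same Gram matrix S as U, so 0 < S <= I.
   In an eigenbasis of H the implicit equation U = Ut + s/2 A_Ut Ut decouples
   into one N x N system per eigenvalue mu, with matrix I + s/2 (mu G - K)
   (G = Ut^T Ut, K = Ut^T H Ut), which the step-size bound makes invertible;
   hence Ut and Uh, like U, only have components along eigenvalues <= 0, and
   (w, H w) <= 0 on their ranges.  Now if U_{n+1} x = 0 then
   Uh x = s H Uh (I - S) x; pairing with Uh (I - S) x gives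
   x^T (S - S^2) x <= 0, which forces (I - S) x = 0, then Uh x = 0,
   contradicting S > 0. *)

Section Forms.
Variables (R : rcfType) (n : nat).
Implicit Types (M S T U G K : 'M[R]_n) (x y z : 'cV[R]_n).

Lemma ipDl M x y z : ip M (x + y) z = ip M x z + ip M y z.
Proof. by rewrite /ip linearD /= !mulmxDl mxE. Qed.

Lemma ipDr M x y z : ip M z (x + y) = ip M z x + ip M z y.
Proof. by rewrite /ip mulmxDr mxE. Qed.

Lemma ipZl M t x y : ip M (t *: x) y = t * ip M x y.
Proof. by rewrite /ip linearZ /= -!scalemxAl mxE. Qed.

Lemma ipZr M t x y : ip M x (t *: y) = t * ip M x y.
Proof. by rewrite /ip -scalemxAr mxE. Qed.

Lemma ip_suml M (I : finType) (g : I -> R) (w : I -> 'cV[R]_n) y :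
  ip M (\sum_i g i *: w i) y = \sum_i g i * ip M (w i) y.
Proof.
rewrite /ip linear_sum /= !mulmx_suml summxE.
by apply: eq_bigr => i _; rewrite linearZ /= -!scalemxAl mxE.
Qed.

Lemma ip_sumr M (I : finType) (g : I -> R) (w : I -> 'cV[R]_n) x :
  ip M x (\sum_i g i *: w i) = \sum_i g i * ip M x (w i).
Proof.
rewrite /ip mulmx_sumr summxE.
by apply: eq_bigr => i _; rewrite -scalemxAr mxE.
Qed.

Lemma ipBM M S x y : ip (M - S) x y = ip M x y - ip S x y.
Proof. by rewrite /ip mulmxBr mulmxBl !mxE. Qed.

Lemma ipDM M S x y : ip (M + S) x y = ip M x y + ip S x y.
Proof. by rewrite /ip mulmxDr mulmxDl !mxE. Qed.

Lemma ipZM t M x y : ip (t *: M) x y = t * ip M x y.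
Proof. by rewrite /ip -scalemxAr -scalemxAl mxE. Qed.

Lemma ip_mulmx m M (A B : 'M[R]_(n, m)) (u v : 'cV[R]_m) :
  ip M (A *m u) (B *m v) = ip (A^T *m M *m B) u v.
Proof. by rewrite /ip trmx_mul !mulmxA. Qed.

Lemma ipC M x y : M^T = M -> ip M x y = ip M y x.
Proof.
move=> sM; rewrite /ip -[in LHS](trmxK (x^T *m M *m y)) mxE.
by rewrite !trmx_mul trmxK sM mulmxA.
Qed.

Lemma selfadj_trmx M H : selfadj M H -> H^T *m M = M *m H.
Proof.
move=> saH; apply/matrixP => i j; have := saH (delta_mx i 0) (delta_mx j 0).
rewrite /ip trmx_mul trmx_delta !mulmxA -[_ *m H^T *m M]mulmxA -[_ *m M *m H]mulmxA.
by rewrite -!rowE -!colE !mxE.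
Qed.

Lemma ip1_gt0 x : x != 0 -> 0 < ip 1%:M x x.
Proof.
move=> x0; rewrite /ip mulmx1 mxE lt0r sumr_ge0 ?andbT; last first.
  by move=> i _; rewrite mxE -expr2 sqr_ge0.
apply: contra x0; rewrite psumr_eq0; last by move=> i _; rewrite mxE -expr2 sqr_ge0.
move/allP => x0; apply/eqP/matrixP => i j; rewrite (ord1 j) mxE.
by have := x0 i (mem_index_enum _); rewrite mxE -expr2 sqrf_eq0 => /eqP.
Qed.

Lemma ip1_ge0 x : 0 <= ip 1%:M x x.
Proof.
by have [->|/ip1_gt0/ltW //] := eqVneq x 0; rewrite /ip trmx0 !mul0mx mxE.
Qed.

Lemma psdmx_ge0 S x : psdmx S -> 0 <= ip S x x.
Proof. by move=> pS; apply: pS.2. Qed.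

Lemma pdmx_psd S : pdmx S -> psdmx S.
Proof.
move=> [sS pS]; split=> // x; have [->|/pS/ltW //] := eqVneq x 0.
by rewrite trmx0 !mul0mx mxE.
Qed.

Lemma unitmx_of_ip_gt0 S : (forall x, x != 0 -> 0 < ip S x x) -> S \in unitmx.
Proof.
move=> pS; rewrite -unitmx_tr -row_free_unit -kermx_eq0; apply: contraT => kS.
set r := nz_row (kermx S^T).
have rS : r *m S^T = 0 by apply/sub_kermxP; exact: nz_row_sub.
have Sr : S *m r^T = 0 by rewrite -[S]trmxK -trmx_mul rS trmx0.
have := pS r^T; rewrite trmx_eq0 nz_row_eq0 => /(_ kS).
by rewrite /ip -mulmxA Sr mulmx0 mxE ltxx.
Qed.

Lemma psdmxD S T : psdmx S -> psdmx T -> psdmx (S + T).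
Proof.
move=> [sS pS] [sT pT]; split; first by rewrite /symmx linearD /= sS sT.
by move=> x; rewrite -/(ip _ x x) ipDM; apply: addr_ge0; [apply: pS | apply: pT].
Qed.

Lemma psdmxZ t S : 0 <= t -> psdmx S -> psdmx (t *: S).
Proof.
move=> t_ge0 [sS pS]; split; first by rewrite /symmx linearZ /= sS.
by move=> x; rewrite -/(ip _ x x) ipZM mulr_ge0 //; apply: pS.
Qed.

Lemma lemx_trans S T U : lemx S T -> lemx T U -> lemx S U.
Proof. by move=> ST TU; rewrite /lemx -(subrKA T) addrC; apply: psdmxD. Qed.

Lemma lemx_addr S T : psdmx T -> lemx S (S + T).
Proof. by rewrite /lemx addrC addKr. Qed.

Lemma psdmx_CauchySchwarz S x y : psdmx S -> ip S x y ^+ 2 <= ip S x x * ip S y y.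
Proof.
move=> [sS pS]; set a := ip S x x; set b := ip S x y; set c := ip S y y.
have quad t : 0 <= a + 2%:R * t * b + t ^+ 2 * c.
  have := pS (x + t *: y); rewrite -/(ip S _ _).
  rewrite !(ipDl, ipDr, ipZl, ipZr) (ipC y x sS).
  by congr (0 <= _); rewrite /a /b /c; ring.
have a0 : 0 <= a := pS x; have c0 : 0 <= c := pS y.
have [c_eq0|c_neq0] := eqVneq c 0.
  have [->|b_neq0] := eqVneq b 0; first by rewrite c_eq0 mulr0 expr0n.
  have := quad (- (a + 1) / (2%:R * b)); rewrite c_eq0 mulr0 addr0.
  have -> : 2%:R * (- (a + 1) / (2%:R * b)) * b = - (a + 1) by field.
  lra.
have c_gt0 : 0 < c by rewrite lt0r c_neq0.
have := quad (- b / c).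
have -> : a + 2%:R * (- b / c) * b + (- b / c) ^+ 2 * c = a - b ^+ 2 / c by field.
by rewrite subr_ge0 ler_pdivrMr.
Qed.

Lemma psdmx_ker S x : psdmx S -> ip S x x = 0 -> S *m x = 0.
Proof.
move=> pS Sx0; have := psdmx_CauchySchwarz (S *m x) x pS; rewrite Sx0 mulr0.
have -> : ip S (S *m x) x = ip 1%:M (S *m x) (S *m x).
  by rewrite /ip mulmx1 -mulmxA.
apply: contraTeq => Sx_neq0; rewrite -ltNge exprn_gt0 //; exact: ip1_gt0.
Qed.

Lemma psdmx_sub_sqr S : psdmx S -> lemx S 1%:M -> psdmx (S - S *m S).
Proof.
move=> pS [_ S1]; have sS := pS.1.
split; first by rewrite /symmx linearB /= trmx_mul sS.
move=> x; rewrite -/(ip _ x x) ipBM.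
have SS : ip (S *m S) x x = ip 1%:M (S *m x) (S *m x).
  by rewrite ip_mulmx mulmx1 sS.
have SSx : ip S x (S *m x) = ip 1%:M (S *m x) (S *m x).
  by rewrite -SS /ip !mulmxA.
(* Cauchy-Schwarz for the form of S:
   |Sx|^4 = (x, Sx)_S^2 <= (x, x)_S (Sx, Sx)_S <= (x, x)_S |Sx|^2. *)
have le1 : ip S (S *m x) (S *m x) <= ip 1%:M (S *m x) (S *m x).
  by rewrite -subr_ge0 -ipBM; exact: S1.
have := psdmx_CauchySchwarz x (S *m x) pS; rewrite SS SSx.
have := psdmx_ge0 x pS; have := psdmx_ge0 (S *m x) pS.
have := ip1_ge0 (S *m x).
rewrite subr_ge0; nra.
Qed.

Lemma step_factor_unitmx G K t mu lo hi :
  0 <= t -> t * (hi - lo) < 1 -> lo <= mu -> psdmx G -> lemx G 1%:M ->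
  (forall x, ip K x x <= hi * ip G x x) -> 1%:M + t *: (mu *: G - K) \in unitmx.
Proof.
move=> t_ge0 t_small lo_mu psdG G_le1 K_le; apply: unitmx_of_ip_gt0 => x x0.
rewrite ipDM ipZM ipBM ipZM.
have T_gt0 := ip1_gt0 x0; have g_ge0 := psdmx_ge0 x psdG.
have g_le : ip G x x <= ip 1%:M x x by rewrite -subr_ge0 -ipBM; apply: psdmx_ge0.
have Kx := K_le x.
set T := ip 1%:M x x in T_gt0 g_le *; set g := ip G x x in g_ge0 g_le Kx *.
have drift : t * (lo - hi) * g <= t * (mu * g - ip K x x).
  rewrite -mulrA ler_wpM2l //.
  have : 0 <= (mu - lo) * g by rewrite mulr_ge0 ?subr_ge0.
  lra.
suff : t * (hi - lo) * g < T by lra.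
have [tc_le0|tc_gt0] := lerP (t * (hi - lo)) 0; first by nra.
apply: le_lt_trans (ler_wpM2l (ltW tc_gt0) g_le) _.
by rewrite gtr_pMl.
Qed.

End Forms.

Section EigenSum.
Variables (R : rcfType) (n : nat) (M H : 'M[R]_n).
Hypotheses (psdM : psdmx M) (saH : selfadj M H).

Lemma ip_eigen_sum_le (I : finType) (w : I -> 'cV[R]_n) (a g : I -> R) c :
  (forall i, H *m w i = a i *: w i) -> (forall i, g i != 0 -> a i <= c) ->
  ip M (\sum_i g i *: w i) (H *m \sum_i g i *: w i)
    <= c * ip M (\sum_i g i *: w i) (\sum_i g i *: w i).
Proof.
move=> Hw a_le; set z := \sum_i _; pose e i := Num.sqrt (c - a i).
have Hz : H *m z = \sum_j (g j * a j) *: w j.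
  by rewrite mulmx_sumr; apply: eq_bigr => j _; rewrite -scalemxAr Hw scalerA.
(* Eigenvectors with distinct eigenvalues are M-orthogonal, hence
   (z, (H - c) z) = - (z', z') with z' := sum_i g_i sqrt (c - a_i) w_i. *)
pose z' := \sum_i (g i * e i) *: w i.
suff -> : ip M z (H *m z) = c * ip M z z - ip M z' z'.
  by rewrite lerBlDr lerDl psdmx_ge0.
rewrite Hz /z' !ip_suml mulr_sumr -sumrB; apply: eq_bigr => i _.
rewrite !ip_sumr !mulr_sumr -sumrB; apply: eq_bigr => j _.
have [-> | gi0] := eqVneq (g i) 0; first by rewrite !(mulr0, mul0r, subr0).
have [-> | gj0] := eqVneq (g j) 0; first by rewrite !(mulr0, mul0r, subr0).
have [-> | wij0] := eqVneq (ip M (w i) (w j)) 0; first by rewrite !(mulr0, subr0).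
have aij : a i = a j.
  by apply: (mulIf wij0); have := saH (w i) (w j); rewrite !Hw ipZl ipZr mulrC.
have eij : e i * e j = c - a j by rewrite /e aij -expr2 sqr_sqrtr // subr_ge0 a_le.
have -> : a j = c - e i * e j by rewrite eij opprB addrC subrK.
ring.
Qed.

End EigenSum.

Section Eigenbasis.
Variables (F : fieldType) (n : nat) (A P : 'M[F]_n) (a : 'rV[F]_n).
Hypotheses (Pu : P \in unitmx) (PA : P *m A = diag_mx a *m P).

Lemma col_invmx_neq0 k : col k (invmx P) != 0.
Proof.
apply: contraTneq isT => Pk0.
have := congr1 (col k) (mulmxV Pu); rewrite colE -mulmxA -colE Pk0 mulmx0.
move/matrixP/(_ k 0); rewrite !mxE eqxx => /eqP.
by rewrite eq_sym oner_eq0.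
Qed.

Lemma eigen_col_invmx k : A *m col k (invmx P) = a 0 k *: col k (invmx P).
Proof.
have AP : A *m invmx P = invmx P *m diag_mx a.
  by rewrite -[LHS](mulKmx Pu) [P *m _]mulmxA PA mulmxK.
rewrite {1}colE mulmxA AP mul_mx_diag -colE.
by apply/matrixP => i j; rewrite !mxE mulrC.
Qed.

Lemma eigen_row_mul k t m (X : 'M[F]_(n, m)) (G K : 'M[F]_m) :
  row k (P *m (X + t *: (A *m X *m G - X *m K))) =
  row k (P *m X) *m (1%:M + t *: (a 0 k *: G - K)).
Proof.
have kPA : row k P *m A = a 0 k *: row k P.
  by rewrite -row_mul PA row_mul row_diag_mx -scalemxAl -rowE.
rewrite !row_mul !mulmxDr mulmx1 -!scalemxAr !mulmxBr !mulmxA kPA.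
by rewrite -!scalemxAr -!scalemxAl.
Qed.

End Eigenbasis.

Section EigenSupport.
Variables (R : rcfType) (n : nat) (H P : 'M[R]_n) (a : 'rV[R]_n).
Hypotheses (Pu : P \in unitmx) (PH : P *m H = diag_mx a *m P).

(* The rows of [P *m X] are the coordinates of the columns of [X] in the
   eigenbasis of [H] formed by the columns of [invmx P]. *)
Definition eigen_support_le (c : R) m (X : 'M[R]_(n, m)) :=
  forall k, c < a 0 k -> row k (P *m X) = 0.

Lemma eigen_support_le0 c m : eigen_support_le c (0 : 'M_(n, m)).
Proof. by move=> k _; rewrite mulmx0 row0. Qed.

Lemma eigen_support_leD c m (X Y : 'M_(n, m)) :
  eigen_support_le c X -> eigen_support_le c Y -> eigen_support_le c (X + Y).
Proof. by move=> sX sY k ak; rewrite mulmxDr linearD /= sX // sY // addr0. Qed.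

Lemma eigen_support_leZ c m t (X : 'M_(n, m)) :
  eigen_support_le c X -> eigen_support_le c (t *: X).
Proof. by move=> sX k ak; rewrite -scalemxAr linearZ /= sX // scaler0. Qed.

Lemma eigen_support_leB c m (X Y : 'M_(n, m)) :
  eigen_support_le c X -> eigen_support_le c Y -> eigen_support_le c (X - Y).
Proof. by move=> sX sY k ak; rewrite mulmxBr linearB /= sX // sY // subrr. Qed.

Lemma eigen_support_le_mulmx c m p (X : 'M_(n, m)) (Y : 'M_(m, p)) :
  eigen_support_le c X -> eigen_support_le c (X *m Y).
Proof. by move=> sX k ak; rewrite mulmxA row_mul sX // mul0mx. Qed.

Lemma eigen_support_le_col c m (X : 'M_(n, m)) :
  (forall j, eigen_support_le c (col j X)) -> eigen_support_le c X.
Proof.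
move=> sX k ak; apply/rowP => j; have /rowP/(_ 0) := sX j k ak.
by rewrite !mxE; under eq_bigr do rewrite mxE.
Qed.

Lemma eigen_support_le_eigenvector c mu (v : 'cV[R]_n) :
  H *m v = mu *: v -> mu <= c -> eigen_support_le c v.
Proof.
move=> Hv mu_le k ak; apply/rowP => j; rewrite (ord1 j) !mxE.
have /matrixP/(_ k 0) := congr1 (mulmx P) Hv.
rewrite mulmxA PH -mulmxA mul_diag_mx -scalemxAr !mxE => /eqP.
rewrite -subr_eq0 -mulrBl mulf_eq0 subr_eq0 => /orP[/eqP amu|/eqP //].
by move: ak; rewrite amu ltNge mu_le.
Qed.

Lemma eigen_support_le_max c m (X : 'M_(n, m)) :
  (forall k, a 0 k <= c) -> eigen_support_le c X.
Proof. by move=> a_le k; rewrite ltNge a_le. Qed.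

Lemma eigen_support_le_step c t m (X : 'M_(n, m)) (G K : 'M_m) :
  (forall k, c < a 0 k -> 1%:M + t *: (a 0 k *: G - K) \in unitmx) ->
  eigen_support_le c (X + t *: (H *m X *m G - X *m K)) -> eigen_support_le c X.
Proof.
move=> Nu sY k ak; have := sY k ak; rewrite (eigen_row_mul PH) => Xk0.
by rewrite -[row k _]mulmx1 -(mulmxV (Nu k ak)) mulmxA Xk0 !mul0mx.
Qed.

Lemma ip_le_of_eigen_support (M : 'M[R]_n) c z :
  psdmx M -> selfadj M H -> eigen_support_le c z -> ip M z (H *m z) <= c * ip M z z.
Proof.
move=> psdM saH sz.
have -> : z = \sum_k (P *m z) k 0 *: col k (invmx P).
  rewrite -{1}[z](mulKmx Pu); apply/matrixP => i j.
  by rewrite (ord1 j) summxE !mxE; apply: eq_bigr => k _; rewrite !mxE mulrC.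
apply: (ip_eigen_sum_le psdM saH (eigen_col_invmx Pu PH)) => k; apply: contraNT.
by rewrite -ltNge => /sz/rowP/(_ 0); rewrite !mxE => ->.
Qed.

Lemma eigen_diag_bounds lo hi :
  smallest_eigenvalue H lo -> largest_eigenvalue H hi -> forall k, lo <= a 0 k <= hi.
Proof.
move=> [_ lo_min] [_ hi_max] k; have ev : is_eigenvalue H (a 0 k).
  by exists (col k (invmx P)); rewrite col_invmx_neq0 // (eigen_col_invmx Pu PH).
by rewrite lo_min ?hi_max.
Qed.

Lemma eigen_support_le_V0N (M : 'M[R]_n) N (d : 'I_N -> nat)
    (v : forall j : 'I_N, 'I_(d j) -> 'cV[R]_n) c U :
  pdmx M -> (forall j k, is_eigenvector H (v j k)) ->
  (forall j k, ip M (v j k) (H *m v j k) / ip M (v j k) (v j k) <= c) ->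
  in_V0N v U -> eigen_support_le c U.
Proof.
move=> pdM v_eig v_le U_V0; apply: eigen_support_le_col => j.
have [g ->] := U_V0 j; apply: (big_ind (fun X : 'cV_n => eigen_support_le c X)).
- exact: eigen_support_le0.
- exact: eigen_support_leD.
move=> k _; apply: eigen_support_leZ; have [v_neq0 [mu Hv]] := v_eig j k.
apply: (eigen_support_le_eigenvector Hv); have := v_le j k.
by rewrite Hv ipZr mulfK // lt0r_neq0 // pdM.2.
Qed.

End EigenSupport.

Section Complexification.
Local Open Scope sesquilinear_scope.
Variable R : rcfType.
Local Notation C := R[i].
Local Notation cx A := (map_mx (real_complex R) A).

Lemma cx_realmx m n (A : 'M[R]_(m, n)) : cx A \is a realmx.
Proof. by apply/mxOverP => i j; rewrite mxE realE !lecR le_total. Qed.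

Lemma cx_inj m n : injective (fun A : 'M[R]_(m, n) => cx A).
Proof. by apply: map_mx_inj; exact: complexI. Qed.

Lemma cx_trC m n (A : 'M[R]_(m, n)) : (cx A)^t* = cx A^T.
Proof.
by apply/matrixP => i j; rewrite !mxE conj_Creal // realE !lecR le_total.
Qed.

Lemma cx_hermsymmx n (A : 'M[R]_n) : A^T = A -> cx A \is hermsymmx.
Proof. by move=> sA; apply/is_hermitianmxP; rewrite expr0 scale1r cx_trC sA. Qed.

Lemma realmx_cxK m n (B : 'M[C]_(m, n)) :
  B \is a realmx -> cx (map_mx (@complex.Re R) B) = B.
Proof.
move=> /mxOverP rB; apply/matrixP => i j.
by rewrite !mxE complexRe; apply/Creal_ReP/rB.
Qed.

Lemma hermitian_spectral n (A : 'M[C]_n) : A \is hermsymmx ->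
  exists Q (b : 'rV[R]_n), Q \is unitarymx /\ Q *m A = diag_mx (cx b) *m Q.
Proof.
move=> hA; have /orthomx_spectralP EA := hermitian_normalmx hA.
have Qu := spectral_unitarymx A.
exists (spectralmx A), (map_mx (@complex.Re R) (spectral_diag A)); split => //.
rewrite realmx_cxK ?hermitian_spectral_diag_real //.
move: EA (spectral_unit A); set Q := spectralmx A => EA Qu'.
by rewrite [in LHS]EA !mulmxA mulmxV // mul1mx.
Qed.

Lemma complex_real_diag n (A : 'M[R]_n) (a : 'rV[R]_n) (Q : 'M[C]_n) :
  Q \in unitmx -> Q *m cx A = diag_mx (cx a) *m Q ->
  exists2 P, P \in unitmx & P *m A = diag_mx a *m P.
Proof.
move=> Qu QA; rewrite -map_diag_mx in QA.
have [Q' ] := real_similar (ex_intro2 _ _ Q Qu (introT (similarP Qu) QA))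
  (cx_realmx A) (cx_realmx (diag_mx a)).
rewrite inE => /andP[rQ' Q'u] /(similarP Q'u); rewrite -(realmx_cxK rQ') => EQ'.
exists (map_mx (@complex.Re R) Q').
  by rewrite -(map_unitmx (real_complex R)) realmx_cxK.
by apply: cx_inj; rewrite /= !map_mxM.
Qed.

(* T := sqrt (diag m) Q, where M = Q^-1 diag m Q is a unitary diagonalisation;
   the m_k are eigenvalues of M, hence positive. *)
Lemma pdmx_complex_factor n (M : 'M[R]_n) :
  pdmx M -> exists2 T : 'M[C]_n, T \in unitmx & T^t* *m T = cx M.
Proof.
move=> [sM pM]; have [Q [m [Qu QM]]] := hermitian_spectral (cx_hermsymmx sM).
have Qu' := unitarymx_unit Qu.
have m_gt0 k : 0 < m 0 k.
  have [P Pu PM] := complex_real_diag Qu' QM.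
  have := pM _ (col_invmx_neq0 Pu k); rewrite -mulmxA (eigen_col_invmx Pu PM).
  rewrite -scalemxAr mxE pmulr_lgt0 //; have := ip1_gt0 (col_invmx_neq0 Pu k).
  by rewrite /ip mulmx1.
exists (diag_mx (cx (\row_k Num.sqrt (m 0 k))) *m Q).
  rewrite unitmx_mul Qu' andbT unitmxE det_diag unitfE.
  by apply/prodf_neq0 => k _; rewrite !mxE fmorph_eq0 sqrtr_eq0 -ltNge m_gt0.
have -> : cx M = invmx Q *m diag_mx (cx m) *m Q by rewrite -mulmxA -QM mulKmx.
rewrite trmx_mul map_mxM -map_diag_mx cx_trC tr_diag_mx -invmx_unitary //.
rewrite mulmxA map_diag_mx -[in LHS](mulmxA (invmx Q)) mulmx_diag.
congr (_ *m diag_mx _ *m _); apply/rowP => k.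
by rewrite !mxE -rmorphM -expr2 sqr_sqrtr // ltW.
Qed.

(* With T^t* T = M, the identity H^T M = M H says that B := T H T^-1 is
   Hermitian; a unitary diagonalisation of B is brought back to R by
   [real_similar]. *)
Lemma selfadj_eigenbasis n (M H : 'M[R]_n) : pdmx M -> selfadj M H ->
  exists P (a : 'rV[R]_n), P \in unitmx /\ P *m H = diag_mx a *m P.
Proof.
move=> pdM /selfadj_trmx HM; have [T Tu TT] := pdmx_complex_factor pdM.
have TtU : T^t* \in unitmx by rewrite map_unitmx unitmx_tr.
pose B := T *m cx H *m invmx T.
have EB : B = invmx (T^t*) *m cx H^T *m T^t*.
  rewrite -mulmxA -[LHS](mulKmx TtU); congr (_ *m _).
  rewrite /B !mulmxA TT -map_mxM -HM map_mxM -TT.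
  by rewrite !mulmxA mulmxK.
have hB : B \is hermsymmx.
  apply/is_hermitianmxP; rewrite expr0 scale1r [in RHS]EB !trmx_mul !map_mxM.
  by rewrite trmx_inv map_invmx !trmxCK cx_trC trmxK mulmxA.
have [Q [a [Qu QB]]] := hermitian_spectral hB.
suff [P Pu PH] : exists2 P, P \in unitmx & P *m H = diag_mx a *m P.
  by exists P, a.
apply: (complex_real_diag (Q := Q *m T)); first by rewrite unitmx_mul unitarymx_unit.
by rewrite -mulmxA -[T *m _](mulmxKV Tu) -/B mulmxA QB !mulmxA.
Qed.

End Complexification.

Lemma midpoint_shift (R : realFieldType) m n (U Uh Z : 'M[R]_(m, n)) s :
  Uh = U - s *: Z ->
  U = 2^-1 *: (U + Uh) + (s / 2) *: Z /\ Uh = 2^-1 *: (U + Uh) - (s / 2) *: Z.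
Proof. by move=> ->; split; apply/matrixP => i j; rewrite !mxE; lra. Qed.

Section Scheme.
Variables (R : rcfType) (Ng N : nat) (M H : 'M[R]_Ng).
Implicit Types (X : 'M[R]_(Ng, N)).

Lemma psdmx_gram X : psdmx M -> psdmx (gram M X X).
Proof.
move=> psdM; split; first by rewrite /symmx /gram !trmx_mul trmxK psdM.1 mulmxA.
by move=> x; rewrite -/(ip _ x x) /gram -ip_mulmx psdmx_ge0.
Qed.

Lemma AU_skew X : M^T = M -> (AU M H X)^T *m M = - (M *m AU M H X).
Proof.
move=> sM; rewrite /AU /gradE linearB /= !trmx_mul !trmxK sM.
by rewrite mulmxBl mulmxBr opprB !mulmxA.
Qed.

Lemma gram_add_skew (A : 'M[R]_Ng) X t : A^T *m M = - (M *m A) ->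
  gram M (X + t *: (A *m X)) (X + t *: (A *m X)) =
  gram M X X + (t * t) *: gram M (A *m X) (A *m X).
Proof.
move=> skA; rewrite /gram !(linearD, linearZ) /= !mulmxDl -!scalemxAl.
rewrite trmx_mul -[X^T *m A^T *m M]mulmxA skA mulmxN !mulNmx !mulmxA.
by rewrite scalerDr scalerA !scalerN !addrA subrK.
Qed.

Lemma AU_mulmx X : H^T *m M = M *m H ->
  AU M H X *m X = H *m X *m gram M X X - X *m gram M X (H *m X).
Proof.
move=> HM; rewrite /AU /gradE /gram trmx_mul mulmxBl !mulmxA.
by rewrite -[_ *m H^T *m M]mulmxA HM !mulmxA.
Qed.

Lemma gram_midpoint X Y Z t : psdmx M ->
  Y = X + t *: (AU M H X *m X) -> Z = X - t *: (AU M H X *m X) ->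
  gram M Z Z = gram M Y Y /\ lemx (gram M X X) (gram M Y Y).
Proof.
move=> psdM -> ->; rewrite -scaleNr !gram_add_skew ?AU_skew ?psdM.1 // mulrNN.
by split=> //; apply/lemx_addr/psdmxZ; [rewrite -expr2 sqr_ge0 | exact: psdmx_gram].
Qed.

Lemma eigen_support_le_midpoint (P : 'M[R]_Ng) (a : 'rV[R]_Ng) lo hi c t X :
  psdmx M -> selfadj M H -> P \in unitmx -> P *m H = diag_mx a *m P ->
  (forall k, lo <= a 0 k <= hi) -> 0 <= t -> t * (hi - lo) < 1 ->
  lemx (gram M X X) 1%:M ->
  eigen_support_le P a c (X + t *: (AU M H X *m X)) -> eigen_support_le P a c X.
Proof.
move=> psdM saH Pu PH a_range t_ge0 t_small G_le1.
rewrite (AU_mulmx _ (selfadj_trmx saH)); apply: (eigen_support_le_step PH) => k _.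
apply: (step_factor_unitmx (lo := lo) (hi := hi)) => //.
- by case/andP: (a_range k).
- exact: psdmx_gram.
move=> x; rewrite -!ip_mulmx -mulmxA.
apply: (ip_le_of_eigen_support Pu PH (c := hi) psdM saH).
by apply: eigen_support_le_max => l; case/andP: (a_range l).
Qed.

Lemma pdmx_gram_correction X t :
  pdmx M -> selfadj M H -> 0 <= t -> pdmx (gram M X X) -> lemx (gram M X X) 1%:M ->
  (forall w, ip M (X *m w) (H *m (X *m w)) <= 0) ->
  pdmx (gram M (X - t *: (gradE H X *m (1%:M - gram M X X)))
               (X - t *: (gradE H X *m (1%:M - gram M X X)))).
Proof.
move=> pdM saH t_ge0 pdS S_le1 HX_le0; have psdM := pdmx_psd pdM.
set S := gram M X X in pdS S_le1 *; set X1 := X - _.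
split; first exact: (psdmx_gram X1 psdM).1.
move=> x x0; rewrite -/(ip _ x x) /gram -ip_mulmx.
have [X1x0|] := eqVneq (X1 *m x) 0; last exact: pdM.2.
pose y := (1%:M - S) *m x.
have Xx : X *m x = t *: (H *m (X *m y)).
  move/eqP: X1x0; rewrite /X1 mulmxBl subr_eq0 -scalemxAl => /eqP ->.
  by rewrite /gradE /y !mulmxA.
have psdSS := psdmx_sub_sqr (pdmx_psd pdS) S_le1.
have SSx : (S - S *m S) *m x = 0.
  apply: (psdmx_ker psdSS); apply: le_anti; rewrite psdmx_ge0 // andbT.
  have -> : ip (S - S *m S) x x = ip M (X *m x) (X *m y).
    rewrite ip_mulmx -/(gram M X X) -/S /y /ip.
    by rewrite mulmxA -(mulmxA _ S) [S *m (_ - _)]mulmxBr mulmx1.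
  by rewrite Xx ipZl saH mulr_ge0_le0.
have Sy : S *m y = 0 by rewrite /y mulmxA mulmxBr mulmx1.
have y0 : y = 0.
  apply: contraTeq isT => y_neq0; have := pdS.2 y y_neq0.
  by rewrite -mulmxA Sy mulmx0 mxE ltxx.
have := pdS.2 x x0; rewrite -/(ip _ x x) /S /gram -ip_mulmx Xx y0 !mulmx0 scaler0.
by rewrite /ip trmx0 !mul0mx mxE ltxx.
Qed.

End Scheme.

Theorem lemma3p3 (R : rcfType) (Ng N : nat)
    (M : 'M[R]_Ng) (H : 'M[R]_Ng) (lam1 lammax : R)
    (d : 'I_N -> nat) (v : forall j : 'I_N, 'I_(d j) -> 'cV[R]_Ng)
    (s : R) (U Uh U1 : 'M[R]_(Ng, N)) :
  (* inner product: M symmetric positive definite *)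
  pdmx M ->
  (* H self-adjoint with smallest eigenvalue lam1 < 0 and largest lammax *)
  selfadj M H ->
  smallest_eigenvalue H lam1 -> largest_eigenvalue H lammax ->
  lam1 < 0 ->
  (* the spaces V_{0_j}: d_j >= 1, each v_{j,k} an eigenvector of H *)
  (forall j, (1 <= d j)%N) ->
  (forall j k, is_eigenvector H (v j k)) ->
  (* standing assumption lambda_max^0 <= 0 *)
  (forall j k, ip M (v j k) (H *m v j k) / ip M (v j k) (v j k) <= 0) ->
  (* U_n in (V_0)^N cap M_<= *)
  in_V0N v U -> quasi_stiefel M U ->
  (* step size 0 < s_n < 2 / |lam1 - lammax| *)
  0 < s -> s * `|lam1 - lammax| < 2%:R ->
  (* U_{n+1} produced from U_n by one step of the scheme *)
  qo_step M H s U Uh U1 ->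
  pdmx (gram M U1 U1).
Proof.
move=> pdM saH lam1_smallest lammax_largest _ _ v_eig v_le0 U_V0 [pdS S_le1].
move=> s_gt0 s_small [Uh_def ->]; have psdM := pdmx_psd pdM.
have [P [a [Pu PH]]] := selfadj_eigenbasis pdM saH.
have a_range := eigen_diag_bounds Pu PH lam1_smallest lammax_largest.
have [EU EUh] := midpoint_shift Uh_def; set Ut := 2^-1 *: (U + Uh) in EU EUh.
have [S_eq G_le_S] := gram_midpoint psdM EU EUh.
have U_supp := eigen_support_le_V0N PH pdM v_eig v_le0 U_V0.
have Ut_supp : eigen_support_le P a 0 Ut.
  apply: (eigen_support_le_midpoint psdM saH Pu PH a_range (t := s / 2)).
  - by rewrite divr_ge0 // ltW.
  - have : lammax - lam1 <= `|lam1 - lammax| by rewrite distrC ler_norm.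
    have := ltW s_gt0; nra.
  - exact: lemx_trans S_le1.
  by rewrite -EU.
have Uh_supp : eigen_support_le P a 0 Uh.
  have -> : Uh = Ut + Ut - U by rewrite EUh [in RHS]EU opprD addrA addrK.
  by apply: eigen_support_leB => //; apply: eigen_support_leD.
apply: pdmx_gram_correction; rewrite ?S_eq ?(ltW s_gt0) // => w.
have := ip_le_of_eigen_support Pu PH psdM saH (eigen_support_le_mulmx w Uh_supp).
by rewrite mul0r.
Qed.
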